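(* Consider the two-agent zero-sum dynamic game with $K$ stages, dynamics constraints, and control bound constraints $a^i_t\le u^i_t\le b^i_t$ described in the context. Let $(x^*_{1:K+1},u^{1*}_{1:K},u^{2*}_{1:K})$ be the states and controls of a local OLNE at which strict complementarity holds, with multipliers $\lambda^i_t,\underline\nu^i_t,\bar\nu^i_t$ satisfying (COL1)–(COL6), and let $\pi^i_t$ be differentiable feedback policies with $\pi^i_t(x^*_t)=u^{i*}_t$ satisfying the standing policy assumption. Then for every $t\in[K]$ and $i$, the trajectory satisfies the feedback first-order conditions (CFB1)–(CFB7) with multipliers $\lambda^i_s,\underline\nu^i_s,\bar\nu^i_s$ ($s\in T_t$) and $\psi^i_s=\bar\nu^{-i}_s-\underline\nu^{-i}_s$ ($s\in T_{t+1}$); i.e., it satisfies the first-order necessary conditions for a local FBNE.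
   Context: Two-agent zero-sum discrete-time dynamic game with horizon $K\in\mathbb N$. States $x_t\in\mathbb R^n$, known initial state $x_1$; controls $u^i_t\in\mathbb R^{m_i}$, $i\in\{1,2\}$, subject to componentwise bounds $a^i_t\le u^i_t\le b^i_t$. Dynamics $x_{t+1}=f_t(x_t,u^1_t,u^2_t)$, $f_t$ smooth. Agent 1 has stage costs $\ell_t(x_t,u^1_t,u^2_t)$ and terminal cost $\ell_{K+1}(x_{K+1})$; $\ell^1_t=\ell_t$, $\ell^2_t=-\ell_t$, sufficiently smooth. For agent $i$, $-i$ is the other agent; reordered arguments $\ell^i_t(x_t,u^i_t,u^{-i}_t)$, $f_t(x_t,u^i_t,u^{-i}_t)$. $T_t:=\{t,\dots,K\}$. $\perp$ denotes componentwise complementarity. $J=\sum_t\ell_t+\ell_{K+1}$ along the unrolled trajectory; a local OLNE is a feasible pair of control sequences such that neither agent can decrease its cost ($J$ for agent 1, $-J$ for agent 2) by a feasible unilateral change within a neighborhood. Open-loop first-order conditions: for each $i$ there exist $\lambda^i_t,\underline\nu^i_t,\bar\nu^i_t$ ($t\in[K]$) with (COL1) $\nabla_{x_t}\ell^i_t+(\nabla_{x_t}f_t)^\top\lambda^i_t-\lambda^i_{t-1}=0$, $t=2,\dots,K$; (COL2) $\nabla_{u^i_t}\ell^i_t+(\nabla_{u^i_t}f_t)^\top\lambda^i_t-\underline\nu^i_t+\bar\nu^i_t=0$, $t\in[K]$; (COL3) $\nabla_{x_{K+1}}\ell^i_{K+1}-\lambda^i_K=0$; (COL4) dynamics hold;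 (COL5) $a^i_t\le u^i_t\perp\underline\nu^i_t\ge0$; (COL6) $0\le\bar\nu^i_t\perp u^i_t\le b^i_t$. Feedback first-order conditions for agent $i$ at time $t$ (KKT of minimizing $\sum_{s=t}^K\ell^i_s+\ell^i_{K+1}$ over $u^i_{t:K},u^{-i}_{t+1:K},x_{t+1:K+1}$ s.t. dynamics ($s\in T_t$), $u^{-i}_s=\pi^{-i}_s(x_s)$ ($s\in T_{t+1}$), $a^i_s\le u^i_s\le b^i_s$ ($s\in T_t$)): there exist $\lambda^i_s,\underline\nu^i_s,\bar\nu^i_s$ ($s\in T_t$), $\psi^i_s$ ($s\in T_{t+1}$) with (CFB1) $\nabla_{u^{-i}_s}\ell^i_s+(\nabla_{u^{-i}_s}f_s)^\top\lambda^i_s-\psi^i_s=0$, $s\in T_{t+1}$; (CFB2) $\nabla_{u^i_s}\ell^i_s+(\nabla_{u^i_s}f_s)^\top\lambda^i_s-\underline\nu^i_s+\bar\nu^i_s=0$, $s\in T_t$; (CFB3) $\nabla_{x_{K+1}}\ell^i_{K+1}-\lambda^i_K=0$; (CFB4) dynamics for $s\in T_t$; (CFB5) $u^{-i}_s=\pi^{-i}_s(x_s)$, $s\in T_{t+1}$; (CFB6) $a^i_s\le u^i_s\perp\underline\nu^i_s\ge0$, $0\le\bar\nu^i_s\perp u^i_s\le b^i_s$, $s\in T_t$; (CFB7) $\nabla_{x_s}\ell^i_s-\lambda^i_{s-1}+(\nabla_{x_s}f_s)^\top\lambda^i_s+(\nabla_{x_s}\pi^{-i}_s)^\top\psi^i_s=0$,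 $s\in T_{t+1}$. Strict complementarity: for every component $j$, exactly one of $[u^i_s]_j-[a^i_s]_j$ and $[\underline\nu^i_s]_j$ is zero, and exactly one of $[b^i_s]_j-[u^i_s]_j$ and $[\bar\nu^i_s]_j$ is zero. Standing policy assumption (taken as a consequence of strict complementarity): whenever a bound on $[u^i_s]_j$ is active, the $j$-th row of $\nabla_{x_s}\pi^i_s(x_s)$ is zero. *)

From HB Require Import structures.
From mathcomp Require Import all_boot all_order all_algebra.
From mathcomp Require Import all_classical all_reals all_analysis.
Set Implicit Arguments. Unset Strict Implicit. Unset Printing Implicit Defensive.
Import Order.TTheory GRing.Theory Num.Theory.
Import numFieldNormedType.Exports.
Local Open Scope ring_scope.

(* Time indices are natural numbers; t ranges over [K] = 1..K,
   states are indexed 1..K+1.  Vectors are row vectors 'rV[R]_d.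
   Agent-i data are given in "reordered" form: stage cost li t x ui u_oth,
   dynamics fi t x ui u_oth.  *)

Definition grad (R : realType) (d : nat) (g : 'rV[R]_d -> R) (x : 'rV[R]_d)
  : 'rV[R]_d := \row_j ('d g x (delta_mx 0 j)).

(* transposed-Jacobian/vector product (nabla g(x))^T lam, written as a row
   vector.  The library's jacobian 'J g x : 'M_(p, q) satisfies
   v *m 'J g x = 'd g x v, i.e. it is the transpose of the usual Jacobian
   matrix nabla g(x) (q x p); hence (nabla g)^T lam = ('J g x) lam^T, i.e.
   lam *m ('J g x)^T as a row vector. *)
Definition jacT (R : realType) (p q : nat) (g : 'rV[R]_p -> 'rV[R]_q)
  (x : 'rV[R]_p) (lam : 'rV[R]_q) : 'rV[R]_p := lam *m ('J g x)^T.

(* j-th row of the usual Jacobian nabla g(x) (= j-th column of 'J g x) *)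
Definition jac_row (R : realType) (p q : nat) (g : 'rV[R]_p -> 'rV[R]_q)
  (x : 'rV[R]_p) (j : 'I_q) : 'rV[R]_p := (col j ('J g x))^T.

Definition compl_lo (R : realType) (m : nat) (lo v nu : 'rV[R]_m) : Prop :=
  forall j, lo 0 j <= v 0 j /\ 0 <= nu 0 j /\ (v 0 j - lo 0 j) * nu 0 j = 0.
Definition compl_hi (R : realType) (m : nat) (v hi nu : 'rV[R]_m) : Prop :=
  forall j, v 0 j <= hi 0 j /\ 0 <= nu 0 j /\ nu 0 j * (hi 0 j - v 0 j) = 0.

(* Open-loop first-order conditions (COL1)-(COL6) for one agent, with own
   control u (dim m), other agent's control uo (dim mo). *)
Definition OL_conditions (R : realType) (n m mo K : nat)
  (li : nat -> 'rV[R]_n -> 'rV[R]_m -> 'rV[R]_mo -> R)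
  (fi : nat -> 'rV[R]_n -> 'rV[R]_m -> 'rV[R]_mo -> 'rV[R]_n)
  (lT : 'rV[R]_n -> R) (a b : nat -> 'rV[R]_m)
  (x : nat -> 'rV[R]_n) (u : nat -> 'rV[R]_m) (uo : nat -> 'rV[R]_mo)
  (lam : nat -> 'rV[R]_n) (nul nuh : nat -> 'rV[R]_m) : Prop :=
  (forall t, (2 <= t <= K)%N ->
        grad (fun y => li t y (u t) (uo t)) (x t)
        + jacT (fun y => fi t y (u t) (uo t)) (x t) (lam t) - lam t.-1 = 0) /\
      (forall t, (1 <= t <= K)%N ->
        grad (fun v => li t (x t) v (uo t)) (u t)
        + jacT (fun v => fi t (x t) v (uo t)) (u t) (lam t) - nul t + nuh t = 0) /\
      (grad lT (x K.+1) - lam K = 0) /\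
      (forall t, (1 <= t <= K)%N -> x t.+1 = fi t (x t) (u t) (uo t)) /\
      (forall t, (1 <= t <= K)%N -> compl_lo (a t) (u t) (nul t)) /\
    (forall t, (1 <= t <= K)%N -> compl_hi (u t) (b t) (nuh t)).

(* Feedback first-order conditions (CFB1)-(CFB7) for one agent at time t,
   with the other agent's feedback policy po, multipliers lam, nul, nuh
   (used on T_t = {t..K}) and psi (used on T_{t+1}). *)
Definition FB_conditions (R : realType) (n m mo K t : nat)
  (li : nat -> 'rV[R]_n -> 'rV[R]_m -> 'rV[R]_mo -> R)
  (fi : nat -> 'rV[R]_n -> 'rV[R]_m -> 'rV[R]_mo -> 'rV[R]_n)
  (lT : 'rV[R]_n -> R) (a b : nat -> 'rV[R]_m)
  (po : nat -> 'rV[R]_n -> 'rV[R]_mo)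
  (x : nat -> 'rV[R]_n) (u : nat -> 'rV[R]_m) (uo : nat -> 'rV[R]_mo)
  (lam : nat -> 'rV[R]_n) (nul nuh : nat -> 'rV[R]_m)
  (psi : nat -> 'rV[R]_mo) : Prop :=
  (forall s, (t.+1 <= s <= K)%N ->
        grad (fun v => li s (x s) (u s) v) (uo s)
        + jacT (fun v => fi s (x s) (u s) v) (uo s) (lam s) - psi s = 0) /\
      (forall s, (t <= s <= K)%N ->
        grad (fun v => li s (x s) v (uo s)) (u s)
        + jacT (fun v => fi s (x s) v (uo s)) (u s) (lam s) - nul s + nuh s = 0) /\
      (grad lT (x K.+1) - lam K = 0) /\
      (forall s, (t <= s <= K)%N -> x s.+1 = fi s (x s) (u s) (uo s)) /\
      (forall s, (t.+1 <= s <= K)%N -> uo s = po s (x s)) /\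
      (forall s, (t <= s <= K)%N ->
        compl_lo (a s) (u s) (nul s) /\ compl_hi (u s) (b s) (nuh s)) /\
    (forall s, (t.+1 <= s <= K)%N ->
        grad (fun y => li s y (u s) (uo s)) (x s) - lam s.-1
        + jacT (fun y => fi s y (u s) (uo s)) (x s) (lam s)
        + jacT (po s) (x s) (psi s) = 0).

Definition strict_compl (R : realType) (m K : nat) (a b u nul nuh : nat -> 'rV[R]_m)
  : Prop :=
  forall s, (1 <= s <= K)%N -> forall j,
    ((u s 0 j - a s 0 j = 0 \/ nul s 0 j = 0) /\
       ~ (u s 0 j - a s 0 j = 0 /\ nul s 0 j = 0)) /\
    ((b s 0 j - u s 0 j = 0 \/ nuh s 0 j = 0) /\
       ~ (b s 0 j - u s 0 j = 0 /\ nuh s 0 j = 0)).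

Definition policy_assumption (R : realType) (n m K : nat)
  (p : nat -> 'rV[R]_n -> 'rV[R]_m) (a b u : nat -> 'rV[R]_m)
  (x : nat -> 'rV[R]_n) : Prop :=
  forall s, (1 <= s <= K)%N -> forall j,
    (u s 0 j = a s 0 j \/ u s 0 j = b s 0 j) -> jac_row (p s) (x s) j = 0.

(* Unrolled trajectory: state_traj ... k is the state at time k.+1. *)
Fixpoint state_traj (R : realType) (n m1 m2 : nat)
  (f : nat -> 'rV[R]_n -> 'rV[R]_m1 -> 'rV[R]_m2 -> 'rV[R]_n)
  (x1 : 'rV[R]_n) (u1 : nat -> 'rV[R]_m1) (u2 : nat -> 'rV[R]_m2) (k : nat)
  : 'rV[R]_n :=
  match k with
  | 0 => x1
  | k'.+1 => f k (state_traj f x1 u1 u2 k') (u1 k) (u2 k)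
  end.

(* Agent 1's cost J along the unrolled trajectory (agent 2's cost is -J). *)
Definition game_cost (R : realType) (n m1 m2 K : nat)
  (f : nat -> 'rV[R]_n -> 'rV[R]_m1 -> 'rV[R]_m2 -> 'rV[R]_n)
  (l : nat -> 'rV[R]_n -> 'rV[R]_m1 -> 'rV[R]_m2 -> R) (lT : 'rV[R]_n -> R)
  (x1 : 'rV[R]_n) (u1 : nat -> 'rV[R]_m1) (u2 : nat -> 'rV[R]_m2) : R :=
  \sum_(1 <= t < K.+1) l t (state_traj f x1 u1 u2 t.-1) (u1 t) (u2 t)
  + lT (state_traj f x1 u1 u2 K).

Definition feasible (R : realType) (m K : nat) (a b u : nat -> 'rV[R]_m) : Prop :=
  forall t, (1 <= t <= K)%N -> forall j, a t 0 j <= u t 0 j <= b t 0 j.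

Definition local_OLNE (R : realType) (n m1 m2 K : nat)
  (f : nat -> 'rV[R]_n -> 'rV[R]_m1 -> 'rV[R]_m2 -> 'rV[R]_n)
  (l : nat -> 'rV[R]_n -> 'rV[R]_m1 -> 'rV[R]_m2 -> R) (lT : 'rV[R]_n -> R)
  (a1 b1 : nat -> 'rV[R]_m1) (a2 b2 : nat -> 'rV[R]_m2)
  (x1 : 'rV[R]_n) (u1 : nat -> 'rV[R]_m1) (u2 : nat -> 'rV[R]_m2) : Prop :=
  [/\ feasible K a1 b1 u1, feasible K a2 b2 u2 &
      exists2 e : R, 0 < e &
        (forall v1 : nat -> 'rV[R]_m1, feasible K a1 b1 v1 ->
           (forall t, (1 <= t <= K)%N -> `|v1 t - u1 t| < e) ->
           game_cost K f l lT x1 u1 u2 <= game_cost K f l lT x1 v1 u2) /\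
        (forall v2 : nat -> 'rV[R]_m2, feasible K a2 b2 v2 ->
           (forall t, (1 <= t <= K)%N -> `|v2 t - u2 t| < e) ->
           - game_cost K f l lT x1 u1 u2 <= - game_cost K f l lT x1 u1 v2)].

From HB Require Import structures.
From mathcomp Require Import all_boot all_order all_algebra.
From mathcomp Require Import all_classical all_reals all_analysis.
From mathcomp Require Import zify.
Import Order.TTheory GRing.Theory Num.Theory.
Import numFieldNormedType.Exports.
Set Implicit Arguments. Unset Strict Implicit. Unset Printing Implicit Defensive.
Local Open Scope ring_scope.

(* Because the game is zero-sum, the two agents' costate recursions are
   negatives of each other, so lambda^2 = -lambda^1.  Agent -i's stationarity
   condition (COL2) then reads as (CFB1) for agent i with
   psi^i = nuh^{-i} - nul^{-i}.  By complementarity a component of psi^i is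
   nonzero only where a bound on u^{-i} is active, and there the policy
   assumption kills the corresponding row of the policy Jacobian; hence the
   extra term in (CFB7) vanishes and (CFB7) is just (COL1). *)

Section PartialDifferentiability.
Variables (R : realType) (U1 U2 U3 : normedModType R) (W : normedModType R).
Variable g : U1 * U2 * U3 -> W.

Lemma differentiable_slice1 y c2 c3 :
  differentiable g (y, c2, c3) -> differentiable (fun z => g (z, c2, c3)) y.
Proof.
move=> dg; have -> : (fun z => g (z, c2, c3)) = g \o (fun z => (z, c2, c3)) by [].
exact: differentiable_comp.
Qed.

Lemma differentiable_slice2 c1 y c3 :
  differentiable g (c1, y, c3) -> differentiable (fun z => g (c1, z, c3)) y.
Proof.
move=> dg; have -> : (fun z => g (c1, z, c3)) = g \o (fun z => (c1, z, c3)) by [].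
apply: differentiable_comp => //; apply: differentiable_pair => //.
exact: (@differentiable_pair _ _ _ _ (cst c1) id).
Qed.

Lemma differentiable_slice3 c1 c2 y :
  differentiable g (c1, c2, y) -> differentiable (fun z => g (c1, c2, z)) y.
Proof.
move=> dg; have -> : (fun z => g (c1, c2, z)) = g \o (fun z => (c1, c2, z)) by [].
exact: differentiable_comp.
Qed.

End PartialDifferentiability.

Lemma gradN (R : realType) d (h : 'rV[R]_d -> R) y :
  differentiable h y -> grad (fun z => - h z) y = - grad h y.
Proof.
move=> dh; apply/matrixP => i j; rewrite !mxE.
have -> : (fun z => - h z) = - h by [].
by rewrite diffN.
Qed.

Lemma jacTN (R : realType) p q (g : 'rV[R]_p -> 'rV[R]_q) x (lam : 'rV[R]_q) :
  jacT g x (- lam) = - jacT g x lam.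
Proof. by rewrite /jacT mulNmx. Qed.

Lemma jacT_eq0 (R : realType) p q (g : 'rV[R]_p -> 'rV[R]_q) x (lam : 'rV[R]_q) :
  (forall j, lam 0 j = 0 \/ jac_row g x j = 0) -> jacT g x lam = 0.
Proof.
move=> H; apply/matrixP => i k; rewrite (ord1 i) /jacT !mxE.
apply: big1 => j _; rewrite !mxE.
case: (H j) => [->|gj0]; first by rewrite mul0r.
have: jac_row g x j 0 k = 0 by rewrite gj0 mxE.
by rewrite /jac_row !mxE => ->; rewrite mulr0.
Qed.

Lemma jacT_policy_multiplier_eq0 (R : realType) n m (a b u nul nuh : 'rV[R]_m)
    (p : 'rV[R]_n -> 'rV[R]_m) x :
  compl_lo a u nul -> compl_hi u b nuh ->
  (forall j, u 0 j = a 0 j \/ u 0 j = b 0 j -> jac_row p x j = 0) ->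
  jacT p x (nuh - nul) = 0.
Proof.
move=> lo hi pa; apply: jacT_eq0 => j.
have [_ [_ /eqP]] := lo j; have [_ [_ /eqP]] := hi j.
rewrite !mulf_eq0 !subr_eq0 => /orP[nuh0|/eqP ub] /orP[/eqP lb|nul0].
- by right; apply: pa; left.
- by left; rewrite !mxE (eqP nuh0) (eqP nul0) subrr.
- by right; apply: pa; left.
- by right; apply: pa; right.
Qed.

Lemma backward_induction_opp (V : zmodType) K (lam mu : nat -> V) :
  mu K = - lam K ->
  (forall t, (2 <= t <= K)%N -> mu t = - lam t -> mu t.-1 = - lam t.-1) ->
  forall s, (1 <= s <= K)%N -> mu s = - lam s.
Proof.
move=> muK step; suff H k : (k < K)%N -> mu (K - k)%N = - lam (K - k)%N.
  move=> s /andP[s1 sK]; have := H (K - s)%N.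
  have -> : (K - (K - s) = s)%N by lia.
  by apply; lia.
elim: k => [_|k IH kK]; first by rewrite subn0.
have -> : (K - k.+1 = (K - k).-1)%N by lia.
by apply: step; [lia | apply: IH; lia].
Qed.

Lemma stationarity_zero_sum (R : realType) d k
    (h h' : 'rV[R]_d -> R) (g : 'rV[R]_d -> 'rV[R]_k) y lam (nul nuh : 'rV[R]_d) :
  differentiable h y -> (forall z, h' z = - h z) ->
  grad h y + jacT g y lam - nul + nuh = 0 ->
  grad h' y + jacT g y (- lam) - (nuh - nul) = 0.
Proof.
move=> dh h'E stat; have -> : h' = fun z => - h z by apply/funext.
by rewrite gradN // jacTN -oppr0 -stat !opprD !opprK addrA addrAC.
Qed.

Section ZeroSumCostates.
Variables (R : realType) (n m1 m2 K : nat).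
Variables (f : nat -> 'rV[R]_n -> 'rV[R]_m1 -> 'rV[R]_m2 -> 'rV[R]_n)
  (l : nat -> 'rV[R]_n -> 'rV[R]_m1 -> 'rV[R]_m2 -> R) (lT : 'rV[R]_n -> R).
Hypotheses (dlx : forall s c1 c2 y, differentiable (fun z => l s z c1 c2) y)
  (dlT : forall y, differentiable lT y).

Lemma OL_costates_opp (a1 b1 : nat -> 'rV[R]_m1) (a2 b2 : nat -> 'rV[R]_m2)
    x u1 u2 lam1 lam2 nul1 nuh1 nul2 nuh2 :
  OL_conditions K l f lT a1 b1 x u1 u2 lam1 nul1 nuh1 ->
  OL_conditions K (fun t y v2 v1 => - l t y v1 v2) (fun t y v2 v1 => f t y v1 v2)
    (fun y => - lT y) a2 b2 x u2 u1 lam2 nul2 nuh2 ->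
  forall s, (1 <= s <= K)%N -> lam2 s = - lam1 s.
Proof.
move=> [col1 [_ [col3 _]]] [col1' [_ [col3' _]]].
apply: backward_induction_opp.
  by move/subr0_eq: col3' => <-; rewrite gradN //; move/subr0_eq: col3 => <-.
move=> t t2K lamt; move/subr0_eq: (col1' t t2K) => <-.
by move/subr0_eq: (col1 t t2K) => <-; rewrite gradN // lamt jacTN opprD.
Qed.

End ZeroSumCostates.

Lemma OL_conditions_FB (R : realType) (n m mo K t : nat)
    (li : nat -> 'rV[R]_n -> 'rV[R]_m -> 'rV[R]_mo -> R)
    (fi : nat -> 'rV[R]_n -> 'rV[R]_m -> 'rV[R]_mo -> 'rV[R]_n)
    (lT : 'rV[R]_n -> R) (a b : nat -> 'rV[R]_m) (ao bo : nat -> 'rV[R]_mo)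
    (po : nat -> 'rV[R]_n -> 'rV[R]_mo)
    x u uo lam nul nuh (nulo nuho : nat -> 'rV[R]_mo) :
  OL_conditions K li fi lT a b x u uo lam nul nuh ->
  (forall s, (1 <= s <= K)%N ->
     grad (fun v => li s (x s) (u s) v) (uo s)
     + jacT (fun v => fi s (x s) (u s) v) (uo s) (lam s) - (nuho s - nulo s) = 0) ->
  (forall s, (1 <= s <= K)%N ->
     compl_lo (ao s) (uo s) (nulo s) /\ compl_hi (uo s) (bo s) (nuho s)) ->
  policy_assumption K po ao bo uo x ->
  (forall s, (1 <= s <= K)%N -> po s (x s) = uo s) ->
  (1 <= t <= K)%N ->
  FB_conditions K t li fi lT a b po x u uo lam nul nuh (fun s => nuho s - nulo s).
Proof.
move=> [col1 [col2 [col3 [col4 [col5 col6]]]]] stat_o compl_o pa poE t1K.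
have Tt_in_K s : (t <= s <= K)%N -> (1 <= s <= K)%N by lia.
have Tt1_in_K s : (t.+1 <= s <= K)%N -> (1 <= s <= K)%N by lia.
have Tt1_ge2 s : (t.+1 <= s <= K)%N -> (2 <= s <= K)%N by lia.
split; [by move=> s /Tt1_in_K; apply: stat_o|].
split; [by move=> s /Tt_in_K; apply: col2|].
split; [exact: col3|].
split; [by move=> s /Tt_in_K; apply: col4|].
split; [by move=> s /Tt1_in_K s1K; rewrite poE|].
split; [by move=> s /Tt_in_K s1K; split; [apply: col5|apply: col6]|].
move=> s sK; have [lo hi] := compl_o s (Tt1_in_K s sK).
rewrite (jacT_policy_multiplier_eq0 lo hi); last by move=> j; apply: pa; apply: Tt1_in_K.
by rewrite addr0 addrAC; apply: col1; apply: Tt1_ge2.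
Qed.

(* The equilibrium property, the initial state and strict complementarity
   enter only through the open-loop multipliers and the policy assumption. *)
Theorem theorem2 (R : realType) (n m1 m2 K : nat)
  (f : nat -> 'rV[R]_n -> 'rV[R]_m1 -> 'rV[R]_m2 -> 'rV[R]_n)
  (l : nat -> 'rV[R]_n -> 'rV[R]_m1 -> 'rV[R]_m2 -> R)
  (lT : 'rV[R]_n -> R)
  (a1 b1 : nat -> 'rV[R]_m1) (a2 b2 : nat -> 'rV[R]_m2)
  (x1 : 'rV[R]_n)
  (x : nat -> 'rV[R]_n) (u1 : nat -> 'rV[R]_m1) (u2 : nat -> 'rV[R]_m2)
  (lam1 lam2 : nat -> 'rV[R]_n)
  (nul1 nuh1 : nat -> 'rV[R]_m1) (nul2 nuh2 : nat -> 'rV[R]_m2)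
  (pi1 : nat -> 'rV[R]_n -> 'rV[R]_m1) (pi2 : nat -> 'rV[R]_n -> 'rV[R]_m2) :
  (forall t (p : 'rV[R]_n * 'rV[R]_m1 * 'rV[R]_m2),
      differentiable (fun q : 'rV[R]_n * 'rV[R]_m1 * 'rV[R]_m2 =>
                        f t q.1.1 q.1.2 q.2) p) ->
  (forall t (p : 'rV[R]_n * 'rV[R]_m1 * 'rV[R]_m2),
      differentiable (fun q : 'rV[R]_n * 'rV[R]_m1 * 'rV[R]_m2 =>
                        l t q.1.1 q.1.2 q.2) p) ->
  (forall y : 'rV[R]_n, differentiable lT y) ->
  (forall t (y : 'rV[R]_n), differentiable (pi1 t) y) ->
  (forall t (y : 'rV[R]_n), differentiable (pi2 t) y) ->
  x 1%N = x1 ->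
  local_OLNE K f l lT a1 b1 a2 b2 x1 u1 u2 ->
  OL_conditions K l f lT a1 b1 x u1 u2 lam1 nul1 nuh1 ->
  OL_conditions K (fun t y v2 v1 => - l t y v1 v2) (fun t y v2 v1 => f t y v1 v2)
    (fun y => - lT y) a2 b2 x u2 u1 lam2 nul2 nuh2 ->
  strict_compl K a1 b1 u1 nul1 nuh1 ->
  strict_compl K a2 b2 u2 nul2 nuh2 ->
  (forall t, (1 <= t <= K)%N -> pi1 t (x t) = u1 t) ->
  (forall t, (1 <= t <= K)%N -> pi2 t (x t) = u2 t) ->
  policy_assumption K pi1 a1 b1 u1 x ->
  policy_assumption K pi2 a2 b2 u2 x ->
  forall t, (1 <= t <= K)%N ->
    FB_conditions K t l f lT a1 b1 pi2 x u1 u2 lam1 nul1 nuh1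
      (fun s => nuh2 s - nul2 s) /\
    FB_conditions K t (fun s y v2 v1 => - l s y v1 v2)
      (fun s y v2 v1 => f s y v1 v2) (fun y => - lT y) a2 b2 pi1 x u2 u1
      lam2 nul2 nuh2 (fun s => nuh1 s - nul1 s).
Proof.
move=> _ dl dlT _ _ _ _ OL1 OL2 _ _ pi1E pi2E pa1 pa2 t t1K.
have dlx s c1 c2 y : differentiable (fun z => l s z c1 c2) y.
  exact: differentiable_slice1 (dl s (y, c1, c2)).
have dlu1 s c1 c2 y : differentiable (fun z => l s c1 z c2) y.
  exact: differentiable_slice2 (dl s (c1, y, c2)).
have dlu2 s c1 c2 y : differentiable (fun z => l s c1 c2 z) y.
  exact: differentiable_slice3 (dl s (c1, c2, y)).
have lam21 := OL_costates_opp dlx dlT OL1 OL2.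
have lam12 s (sK : (1 <= s <= K)%N) : lam1 s = - lam2 s by rewrite lam21 ?opprK.
have [_ [col2 [_ [_ [col5 col6]]]]] := OL1.
have [_ [col2' [_ [_ [col5' col6']]]]] := OL2.
split.
- apply: (OL_conditions_FB (ao := a2) (bo := b2)) => // s sK.
  + rewrite lam12 //.
    apply: (stationarity_zero_sum (h := fun v => - l s (x s) (u1 s) v))
      (col2' s sK) => [|z]; last by rewrite opprK.
    exact: differentiableN (dlu2 s (x s) (u1 s) (u2 s)).
  + by split; [apply: col5'|apply: col6'].
- apply: (OL_conditions_FB (ao := a1) (bo := b1)) => // s sK.
  + rewrite lam21 //.
    exact: (stationarity_zero_sum (dlu1 s (x s) (u2 s) (u1 s)) _ (col2 s sK)).
  + by split; [apply: col5|apply: col6].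
Qed.
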